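(* Fix nonnegative integers $s,t$, integers $\tilde\lambda_1\ge\tilde\lambda_2\ge\cdots\ge\tilde\lambda_s\ge0$, and nonnegative integers $\epsilon_1,\dots,\epsilon_t$. For an integer $k\ge\max(s,t)$ set $\tilde\lambda_j=0$ for $s<j\le k$, $\epsilon_j=0$ for $t<j\le k$, and $c_j=k+j-1-\epsilon_j$ for $1\le j\le k$. Then $$\det\bigl((c_i)_{\tilde\lambda_j+k-j}\bigr)_{1\le i,j\le k}=(-1)^{k(k-1)/2}\,\Delta(c)\cdot Q(k),$$ where $Q$ is a polynomial in $k$ (depending on the fixed data) of degree at most $2\sum_i\tilde\lambda_i$.
   Context: $(z)_\mu=z(z-1)\cdots(z-\mu+1)$ denotes the descending factorial (with $(z)_0=1$), and $\Delta(c)=\prod_{1\le i<j\le k}(c_j-c_i)$. *)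

From mathcomp Require Import all_boot all_order all_algebra.
Set Implicit Arguments. Unset Strict Implicit. Unset Printing Implicit Defensive.
Import Order.TTheory GRing.Theory Num.Theory.
Local Open Scope ring_scope.

Definition ffact (R : comRingType) (z : R) (mu : nat) : R :=
  \prod_(i < mu) (z - i%:R).

(* c_j = k + j - 1 - eps_j  (1-based j); here 0-based: c_j = k + j - eps_j,
   with eps_j = 0 beyond the given list *)
Definition cvec (eps : seq nat) (k : nat) (j : 'I_k) : rat :=
  (k + j)%:R - (nth 0%N eps j)%:R.

(* the k x k matrix ((c_i)_{lam_j + k - j}) (1-based), lam_j = 0 beyond list *)
Definition ffmat (lam eps : seq nat) (k : nat) : 'M[rat]_k :=
  \matrix_(i < k, j < k) ffact (cvec eps i) (nth 0%N lam j + (k - j.+1))%N.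

Definition Delta (k : nat) (c : 'I_k -> rat) : rat :=
  \prod_(i < k) \prod_(j < k | (i < j)%N) (c j - c i).

From mathcomp Require Import all_boot all_order all_algebra.
From mathcomp Require Import perm ring zify.
Set Implicit Arguments. Unset Strict Implicit. Unset Printing Implicit Defensive.
Import Order.TTheory GRing.Theory Num.Theory.
Local Open Scope ring_scope.

(* Write the (i, j) entry as f_j(c_i) with f_j = (X)_(m_j), m_j = lam_j + k - 1 - j.
   Expanding every f_j in the Newton basis of a node sequence containing all the c_i
   factors the matrix as a Vandermonde matrix in the c_i times the matrix of divided
   differences f_j[p_0, ..., p_l].  The nodes are the run k + t, ..., 2k - 1 (which are
   c_t, ..., c_(k-1)) followed by c_0, ..., c_(t-1).  For j >= s, f_j is monic of degree
   k - 1 - j, so these columns of divided differences are unit antidiagonal and peel off,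
   leaving the minor on the last s rows.  Its entry (r, j) is a polynomial in k of degree
   at most 2 (lam_j + s - 1 - j - r): by Chu-Vandermonde, the quotient of (X)_m by
   (X - k - t)_n is a polynomial in X and k of weighted degree 2 (m - n) when X has weight
   2 and k weight 1, each further division by some X - c_i (c_i is linear in k) lowers
   this weight by 2, and evaluating at a node linear in k leaves a degree bound in k.
   Summing over a permutation, the minor has degree at most 2 (sum lam). *)

Lemma size_sum_leq (R : nzRingType) (I : eqType) (r : seq I) (P : pred I)
    (F : I -> {poly R}) n :
  (forall i, i \in r -> P i -> (size (F i) <= n)%N) ->
  (size (\sum_(i <- r | P i) F i)%R <= n)%N.
Proof. by move=> le_F; apply: leq_trans (size_sum _ _ _) _; apply/bigmax_leqP_seq. Qed.

Lemma size_XMnaddC_le (R : nzRingType) n (c : R) :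
  (size ('X *+ n + c%:P)%R <= 2)%N.
Proof.
rewrite -scaler_nat; apply: leq_trans (size_polyD _ _) _.
by rewrite geq_max (leq_trans (size_scale_leq _ _)) ?size_polyX // size_polyC; case: (_ != 0).
Qed.

Lemma rmorph_ffact (R S : comNzRingType) (f : {rmorphism R -> S}) z m :
  f (ffact z m) = ffact (f z) m.
Proof.
by rewrite rmorph_prod; apply: eq_bigr => i _; rewrite rmorphB rmorph_nat.
Qed.

Section FallingFactorial.
Variable R : comNzRingType.
Implicit Types (z a b : R) (m n : nat).

Lemma ffact0 z : ffact z 0 = 1.
Proof. by rewrite /ffact big_ord0. Qed.

Lemma ffactS z m : ffact z m.+1 = ffact z m * (z - m%:R).
Proof. by rewrite /ffact big_ord_recr. Qed.

Lemma ffactD z m n : ffact z (m + n) = ffact z m * ffact (z - m%:R) n.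
Proof.
elim: n => [|n IHn]; first by rewrite addn0 ffact0 mulr1.
by rewrite addnS !ffactS IHn natrD; ring.
Qed.

Lemma ffactDn a b m :
  ffact (a + b) m = \sum_(0 <= i < m.+1) 'C(m, i)%:R * ffact a (m - i) * ffact b i.
Proof.
elim: m => [|m IHm]; first by rewrite big_nat1 !ffact0 bin0 !mulr1.
have split_terms : \sum_(0 <= i < m.+1) 'C(m, i)%:R * ffact a (m - i) * ffact b i
                     * (a + b - m%:R)
  = \sum_(0 <= i < m.+1) 'C(m, i)%:R * ffact a (m.+1 - i) * ffact b i
    + \sum_(0 <= i < m.+1) 'C(m, i)%:R * ffact a (m - i) * ffact b i.+1.
  rewrite -big_split /=; apply: eq_big_nat => i /andP [_ lt_im].
  rewrite subSn // !ffactS.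
  have -> : (m%:R : R) = (m - i)%N%:R + i%:R by rewrite -natrD subnK.
  ring.
rewrite ffactS IHm big_distrl /= split_terms [in RHS]big_nat_recl // bin0 subn0.
under [in RHS]eq_big_nat => i _ do rewrite binS natrD !mulrDl.
rewrite big_split /= addrA; congr (_ + _).
rewrite [in LHS]big_nat_recl // bin0 subn0; congr (_ + _).
rewrite [in RHS]big_nat_recr //= bin_small // !mul0r addr0.
by apply: eq_big_nat => i /andP [_ lt_im]; rewrite subSS.
Qed.

Lemma horner_ffact (p : {poly R}) x m : (ffact p m).[x] = ffact p.[x] m.
Proof. by rewrite -!horner_evalE (rmorph_ffact (horner_eval x)). Qed.

Lemma ffact_polyC z m : ffact z%:P m = (ffact z m)%:P.
Proof. by rewrite (rmorph_ffact polyC). Qed.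

Lemma ffact_XsubC z m :
  ffact ('X - z%:P) m = \prod_(i < m) ('X - (z + i%:R)%:P).
Proof. by apply: eq_bigr => i _; rewrite polyCD polyC_natr opprD addrA. Qed.

Lemma monic_ffact_XsubC z m : ffact ('X - z%:P) m \is monic.
Proof. by rewrite ffact_XsubC monic_prod_XsubC. Qed.

End FallingFactorial.

Lemma size_ffact_XsubC (R : idomainType) (z : R) m :
  size (ffact ('X - z%:P) m) = m.+1.
Proof.
rewrite ffact_XsubC -(big_mkord xpredT (fun i => 'X - (z + i%:R)%:P)).
by rewrite size_prod_XsubC size_iota subn0.
Qed.

Lemma size_ffact_XaddC (R : idomainType) (z : R) m :
  size (ffact ('X + z%:P) m) = m.+1.
Proof. by rewrite -[z]opprK polyCN size_ffact_XsubC. Qed.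

Lemma ffact_nat (R : comNzRingType) n m : ffact (n%:R : R) m = (n ^_ m)%:R.
Proof.
elim: m => [|m IHm]; first by rewrite ffact0.
rewrite ffactS IHm ffactnSr natrM.
by case: (leqP m n) => [le_mn|lt_nm]; [rewrite natrB | rewrite ffact_small ?mul0r].
Qed.

Lemma bin_ffact_nat (F : numFieldType) n i :
  'C(n, i)%:R = (i`!%:R)^-1 * ffact (n%:R : F) i.
Proof.
rewrite ffact_nat -bin_ffact natrM mulrC mulfK //.
by rewrite pnatr_eq0 -lt0n fact_gt0.
Qed.

Lemma divp_monic_eq_size (F : fieldType) (f g : {poly F}) :
  f \is monic -> g \is monic -> size f = size g -> f %/ g = 1.
Proof.
move=> mon_f mon_g eq_size.
have size_g_gt0 : (0 < size g)%N by rewrite size_poly_gt0 monic_neq0.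
have -> : f = 1 * g + (f - g) by rewrite mul1r addrC subrK.
rewrite divp_addl_mul_small // -(prednK size_g_gt0) ltnS.
apply/leq_sizeP => j le_j; rewrite coefB.
case: (ltngtP j (size g).-1) => [|lt_j|->]; first by rewrite ltnNge le_j.
  by rewrite !nth_default ?subrr // ?eq_size -(prednK size_g_gt0).
move/monicP: mon_f; move/monicP: mon_g; rewrite /lead_coef -eq_size => -> ->.
exact: subrr.
Qed.

Section NewtonBasis.
Variables (F : fieldType) (p : nat -> F).

Definition newton_basis (l : nat) : {poly F} := \prod_(r < l) ('X - (p r)%:P).

Lemma size_newton_basis l : size (newton_basis l) = l.+1.
Proof.
rewrite /newton_basis -(big_mkord xpredT (fun r => 'X - (p r)%:P)).
by rewrite size_prod_XsubC size_iota subn0.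
Qed.

Lemma monic_newton_basis l : newton_basis l \is monic.
Proof. exact: monic_prod_XsubC. Qed.

Lemma newton_basisS l : newton_basis l.+1 = newton_basis l * ('X - (p l)%:P).
Proof. by rewrite /newton_basis big_ord_recr. Qed.

Lemma newton_basisD m n :
  newton_basis (m + n) = newton_basis m * \prod_(i < n) ('X - (p (m + i))%:P).
Proof. by rewrite /newton_basis big_split_ord. Qed.

Lemma newton_basis_root k r : (r < k)%N -> (newton_basis k).[p r] = 0.
Proof.
move=> lt_rk; rewrite horner_prod (bigD1 (Ordinal lt_rk)) //=.
by rewrite !hornerE subrr mul0r.
Qed.

Lemma divp_newton_basis_monic (f : {poly F}) l :
  f \is monic -> (size f <= l.+1)%N -> f %/ newton_basis l = (size f == l.+1)%:R.
Proof.
move=> mon_f; rewrite leq_eqVlt => /orP [/eqP eq_size | lt_size].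
  by rewrite eq_size eqxx divp_monic_eq_size ?monic_newton_basis ?size_newton_basis.
by rewrite divp_small ?size_newton_basis // ltn_eqF.
Qed.

Lemma newton_expansion (f : {poly F}) n :
  f = \sum_(l < n) (f %/ newton_basis l).[p l] *: newton_basis l
      + (f %/ newton_basis n) * newton_basis n.
Proof.
elim: n => [|n IHn]; first by rewrite big_ord0 add0r /newton_basis big_ord0 divp1 mulr1.
rewrite {1}IHn big_ord_recr /= -addrA; congr (_ + _).
rewrite newton_basisS -divp_divl.
set g := f %/ newton_basis n.
rewrite {1}(divp_eq g ('X - (p n)%:P)) modp_XsubC mulrDl addrC -mul_polyC.
by congr (_ + _); rewrite -mulrA [_ * newton_basis n]mulrC.
Qed.

Section Interpolation.
Variables (k : nat) (c : 'I_k -> F) (f : 'I_k -> {poly F}).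
Hypothesis c_node : forall i, exists2 r, (r < k)%N & p r = c i.

Lemma newton_mx :
  \matrix_(i, j) (f j).[c i] =
  \matrix_(i, l) (newton_basis l).[c i] *m
  \matrix_(l < k, j < k) (f j %/ newton_basis l).[p l].
Proof.
apply/matrixP => i j; rewrite !mxE.
have [r lt_rk c_i] := c_node i; rewrite -c_i.
rewrite {1}(newton_expansion (f j) k) hornerD hornerM newton_basis_root //.
rewrite mulr0 addr0 horner_sum; apply: eq_bigr => l _.
by rewrite hornerZ !mxE mulrC c_i.
Qed.

End Interpolation.

Lemma det_newton k (c : 'I_k -> F) (f : 'I_k -> {poly F}) :
  (forall i, exists2 r, (r < k)%N & p r = c i) ->
  \det (\matrix_(i, j) (f j).[c i]) =
  (\prod_(i < k) \prod_(j < k | (i < j)%N) (c j - c i)) *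
  \det (\matrix_(l < k, j < k) (f j %/ newton_basis l).[p l]).
Proof.
move=> c_node; rewrite newton_mx // det_mulmx; congr (_ * _).
have vandermonde : \det (\matrix_(i, j) ('X^j : {poly F}).[c i]) =
    \prod_(i < k) \prod_(j < k | (i < j)%N) (c j - c i).
  rewrite -det_tr.
  have -> : (\matrix_(i, j) ('X^j : {poly F}).[c i])^T = Vandermonde k (\row_j c j).
    by apply/matrixP => i j; rewrite !mxE hornerXn.
  by rewrite det_Vandermonde; apply: eq_bigr => i _; apply: eq_bigr => j _; rewrite !mxE.
rewrite -vandermonde (newton_mx (fun j : 'I_k => 'X^j) c_node) det_mulmx.
rewrite -[X in _ = _ * X]det_tr [X in _ = _ * X]det_trig ?big1 ?mulr1 //.
  move=> i _; rewrite !mxE divp_newton_basis_monic ?monicXn ?size_polyXn //.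
  by rewrite eqxx hornerC.
apply/is_trig_mxP => i j lt_ij; rewrite !mxE divp_small ?horner0 //.
by rewrite size_polyXn size_newton_basis.
Qed.

End NewtonBasis.

Lemma det_peel_antidiagonal (R : comNzRingType) s p (A : 'M[R]_(p + s)) :
  (forall l c : 'I_(p + s), (s <= c)%N -> (p + s <= (l + c).+1)%N ->
      A l c = ((l + c).+1 == p + s)%:R) ->
  \det A = (-1) ^+ (\sum_(s <= i < p + s) i) *
    \det (\matrix_(r < s, j < s) A (rshift p r) (widen_ord (leq_addl p s) j)).
Proof.
elim: p A => [|p IHp] A A_anti.
  rewrite big_geq // expr0 mul1r; congr (\det _).
  by apply/matrixP => i j; rewrite mxE; congr (A _ _); apply: val_inj.
have lift0E (i : 'I_(p + s)) : (lift ord0 i : nat) = i.+1 by rewrite lift0.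
have liftmaxE (j : 'I_(p + s)) : (lift ord_max j : nat) = j.
  by rewrite /= /bump leqNgt ltn_ord.
rewrite (expand_det_col A ord_max) big_ord_recl big1 ?addr0; last first.
  move=> i _; rewrite A_anti; last 2 first.
  - by change (s <= p + s)%N; lia.
  - by change (p.+1 + s <= ((lift ord0 i : nat) + (p + s)).+1)%N; rewrite lift0E; lia.
  have -> : (((lift ord0 i : nat) + (p + s)).+1 == p.+1 + s) = false.
    by rewrite lift0E; apply/negbTE; lia.
  by rewrite mul0r.
rewrite A_anti; last 2 first.
- by change (s <= p + s)%N; lia.
- by change (p.+1 + s <= (0 + (p + s)).+1)%N; lia.
rewrite eqxx mul1r /cofactor (IHp (row' ord0 (col' ord_max A))); last first.
  move=> l c le_sc le_lc; rewrite !mxE A_anti.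
  - by rewrite lift0E liftmaxE.
  - by rewrite liftmaxE.
  - by rewrite lift0E liftmaxE; change (p.+1 + s <= (l.+1 + c).+1)%N; lia.
rewrite mulrA -exprD; congr (_ * _).
  by congr (_ ^+ _); rewrite (big_nat_recr (p + s) s) /= 1?addnC //; lia.
congr (\det _); apply/matrixP => i j; rewrite !mxE; congr (A _ _); apply: val_inj.
  by rewrite /= /bump.
exact: (liftmaxE (widen_ord (leq_addl p s) j)).
Qed.

Lemma size_det_col (R : idomainType) n (A : 'M[{poly R}]_n) (d : 'I_n -> nat) :
  (forall i j, (size (A i j) <= (d j).+1)%N) ->
  (size (\det A) <= (\sum_j d j).+1)%N.
Proof.
move=> size_A; apply: size_sum_leq => σ0 _ _; pose σ := (σ0 : {perm 'I_n}); rewrite size_Msign.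
have le_prod : (size (\prod_i A i (σ i))%R <= (\sum_i d (σ i)).+1)%N.
  elim/big_rec2: _ => [|i m q _ le_q]; first by rewrite size_poly1.
  by apply: leq_trans (size_polyMleq _ _) _; have := size_A i (σ i); lia.
by apply: leq_trans le_prod _; rewrite [X in (_ <= X.+1)%N](reindex_inj (@perm_inj _ σ)).
Qed.

Lemma size_det_weighted (R : idomainType) n (A : 'M[{poly R}]_n) (d e : 'I_n -> nat) :
  (forall i j, (size (A i j) <= (d j).+1 - e i)%N) ->
  (size (\det A) <= (\sum_j d j).+1 - \sum_i e i)%N.
Proof.
move=> size_A; have [->|detA_neq0] := eqVneq (\det A) 0; first by rewrite size_poly0.
pose B := diag_mx (\row_i 'X^(e i)) *m A.
have size_B : (size (\det B) <= (\sum_j d j).+1)%N.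
  apply: size_det_col => i j; rewrite /B mul_diag_mx !mxE.
  have [->|Aij_neq0] := eqVneq (A i j) 0; first by rewrite mulr0 size_poly0.
  rewrite mulrC size_mulXn //.
  have := size_A i j; have := size_poly_gt0 (A i j); rewrite Aij_neq0.
  by move: (size _) (d j) (e i) => a b c; lia.
have detB : \det B = \det A * 'X^(\sum_i e i).
  rewrite det_mulmx det_diag mulrC -prodrXr; congr (_ * _).
  by apply: eq_bigr => i _; rewrite mxE.
by move: size_B; rewrite detB size_mulXn //; lia.
Qed.

Section WeightedDegree.
Variable R : comNzRingType.
Implicit Types (g h : {poly {poly R}}) (w : {poly R}).

(* [g] has weighted degree at most [d] when its inner variable has weight 1 and
   its outer variable [X] has weight 2. *)
Definition wdeg_le (d : nat) g := forall i, (size (g`_i)%R <= d.+1 - i.*2)%N.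

Lemma wdeg_leW d d' g : (d <= d')%N -> wdeg_le d g -> wdeg_le d' g.
Proof. by move=> le_dd' le_g i; apply: leq_trans (le_g i) _; lia. Qed.

Lemma wdeg_le_sum (I : eqType) (r : seq I) (P : pred I) (F : I -> {poly {poly R}}) d :
  (forall i, i \in r -> P i -> wdeg_le d (F i)) -> wdeg_le d (\sum_(i <- r | P i) F i).
Proof.
move=> le_F j; rewrite coef_sum; apply: size_sum_leq => i r_i P_i; exact: le_F.
Qed.

Lemma wdeg_leC d (a : {poly R}) : (size a <= d.+1)%N -> wdeg_le d a%:P.
Proof. by move=> le_a [|i]; rewrite coefC //= size_poly0. Qed.

Lemma wdeg_leM d1 d2 g h : wdeg_le d1 g -> wdeg_le d2 h -> wdeg_le (d1 + d2) (g * h).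
Proof.
move=> le_g le_h i; rewrite coefM; apply: size_sum_leq => j _ _.
have [->|gj_neq0] := eqVneq g`_j 0; first by rewrite mul0r size_poly0.
have [->|hij_neq0] := eqVneq h`_(i - j) 0; first by rewrite mulr0 size_poly0.
apply: leq_trans (size_polyMleq _ _) _.
have := le_g j; have := le_h (i - j)%N; have := ltn_ord j.
have := size_poly_gt0 g`_j; have := size_poly_gt0 h`_(i - j); rewrite gj_neq0 hij_neq0.
by move: (size _) (size _) => a b; lia.
Qed.

Lemma wdeg_le_XsubC w : (size w <= 2)%N -> wdeg_le 2 ('X - w%:P).
Proof.
move=> le_w [|[|i]]; rewrite coefB coefX coefC /=.
- by rewrite sub0r size_polyN; apply: leq_trans le_w _.
- by rewrite subr0 size_poly1.
- by rewrite subr0 size_poly0.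
Qed.

Lemma wdeg_le_ffact_XsubC w e : (size w <= 2)%N -> wdeg_le e.*2 (ffact ('X - w%:P) e).
Proof.
move=> le_w; elim: e => [|e IHe]; first by rewrite ffact0; apply: wdeg_leC; rewrite size_poly1.
rewrite ffactS doubleS -addn2; apply: wdeg_leM => //.
rewrite -polyC_natr -addrA -opprD -polyCD; apply: wdeg_le_XsubC.
by apply: leq_trans (size_polyD _ _) _; rewrite geq_max le_w -polyC_natr size_polyC; case: (_ != 0).
Qed.

Lemma wdeg_le_divXsubC d g q w c :
  (size w <= 2)%N -> wdeg_le d.+2 g -> g = q * ('X - w%:P) + c%:P -> wdeg_le d q.
Proof.
move=> le_w le_g def_g.
have coef_q i : q`_i = g`_i.+1 + q`_i.+1 * w.
  by rewrite def_g coefD coefC addr0 mulrBr coefB coefMX coefMC subrK.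
suff le_q n i : (size q <= i + n)%N -> (size (q`_i)%R <= d.+1 - i.*2)%N.
  by move=> i; apply: (le_q (size q)); lia.
elim: n i => [|n IHn] i le_qi; first by rewrite nth_default ?size_poly0 // -(addn0 i).
rewrite coef_q; apply: leq_trans (size_polyD _ _) _; rewrite geq_max.
apply/andP; split; first by apply: leq_trans (le_g _) _; lia.
have [->|qi_neq0] := eqVneq q`_i.+1 0; first by rewrite mul0r size_poly0.
apply: leq_trans (size_polyMleq _ _) _.
have := IHn i.+1 (ltac:(lia)); have := size_poly_gt0 q`_i.+1; rewrite qi_neq0.
by move: le_w; move: (size _) (size _) => a b; lia.
Qed.

Lemma size_horner_wdeg_le d g w :
  (size w <= 2)%N -> wdeg_le d g -> (size g.[w] <= d.+1)%N.
Proof.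
move=> le_w le_g; rewrite horner_coef; apply: size_sum_leq => -[i lt_i] _ _ /=.
have [->|gi_neq0] := eqVneq g`_i 0; first by rewrite mul0r size_poly0.
have le_wi : (size (w ^+ i) <= i.+1)%N.
  apply: leq_trans (size_poly_exp_leq _ _) _; rewrite ltnS.
  by rewrite -{2}(mul1n i) leq_mul2r; apply/orP; right; lia.
apply: leq_trans (size_polyMleq _ _) _.
have := le_g i; have := size_poly_gt0 g`_i; rewrite gi_neq0.
by move: le_wi; move: (size _) (size _) => a b; lia.
Qed.

End WeightedDegree.

Section InnerEvaluation.
Variable F : fieldType.
Implicit Types (G : {poly {poly F}}) (w : {poly F}).

Lemma wdeg_le_divp_XsubC d G w : (size w <= 2)%N -> wdeg_le d.+2 G ->
  exists2 G', wdeg_le d G' & forall x,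
    map_poly (horner_eval x) G %/ ('X - w.[x]%:P) = map_poly (horner_eval x) G'.
Proof.
move=> le_w le_G.
have [G' def_G'] : exists G', G - G.[w]%:P = G' * ('X - w%:P).
  by apply/factor_theorem; rewrite /root !hornerE subrr.
have def_G : G = G' * ('X - w%:P) + G.[w]%:P by rewrite -def_G' subrK.
exists G'; first exact: wdeg_le_divXsubC le_w le_G def_G.
move=> x; rewrite {1}def_G rmorphD rmorphM /= map_polyXsubC map_polyC /=.
by rewrite divp_addl_mul_small // size_XsubC size_polyC; case: (_ != 0).
Qed.

Lemma wdeg_le_divp_prod_XsubC d n G (w : nat -> {poly F}) :
  (forall i, (i < n)%N -> (size (w i) <= 2)%N) -> wdeg_le (d + n.*2) G ->
  exists2 G', wdeg_le d G' & forall x,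
    map_poly (horner_eval x) G %/ \prod_(i < n) ('X - (w i).[x]%:P) =
    map_poly (horner_eval x) G'.
Proof.
elim: n d G => [|n IHn] d G le_w le_G.
  by exists G => [|x]; [rewrite -(addn0 d) | rewrite big_ord0 divp1].
have le_w' i : (i < n)%N -> (size (w i) <= 2)%N by move=> lt_in; apply: le_w; lia.
have le_G' : wdeg_le (d.+2 + n.*2) G by apply: wdeg_leW le_G; lia.
have [G1 le_G1 def_G1] := IHn d.+2 G le_w' le_G'.
have [G2 le_G2 def_G2] := wdeg_le_divp_XsubC (le_w n (ltnSn n)) le_G1.
by exists G2 => // x; rewrite big_ord_recr /= -divp_divl def_G1 def_G2.
Qed.

End InnerEvaluation.

Lemma divp_ffact_XsubC (F : fieldType) (x : F) n q :
  ffact 'X (n + q) %/ ffact ('X - x%:P) n =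
  \sum_(0 <= e < q.+1) ('C(n + q, q - e)%:R * ffact x (q - e)) *:
                       ffact ('X - (x + n%:R)%:P) e.
Proof.
set S := \sum_(0 <= e < q.+1) _.
have expand : ffact 'X (n + q) =
    \sum_(0 <= i < (n + q).+1) ('C(n + q, i)%:R * ffact x (n + q - i)) *:
                               ffact ('X - x%:P) i.
  rewrite -{1}['X](subrK x%:P) addrC ffactDn; apply: eq_bigr => i _.
  by rewrite ffact_polyC -mul_polyC rmorphM /= polyC_natr.
have high : \sum_(n <= i < (n + q).+1)
    ('C(n + q, i)%:R * ffact x (n + q - i)) *: ffact ('X - x%:P) i =
    S * ffact ('X - x%:P) n.
  rewrite -{1}(add0n n) big_addn subSn ?leq_addr // addKn mulr_suml.
  apply: eq_big_nat => e /andP [_ le_eq]; rewrite (addnC e n) ffactD.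
  have le_neq : (n + e <= n + q)%N by rewrite leq_add2l.
  rewrite -(bin_sub le_neq) !subnDl.
  have -> : 'X - x%:P - n%:R = 'X - (x + n%:R)%:P.
    by rewrite polyCD polyC_natr opprD addrA.
  by rewrite -scalerAl [_ * ffact ('X - x%:P) n]mulrC.
have le_n : (n <= (n + q).+1)%N by rewrite ltnW // ltnS leq_addr.
rewrite expand (@big_cat_nat _ _ _ n 0 (n + q).+1) // /= high addrC.
rewrite divp_addl_mul_small // size_ffact_XsubC ltnS big_seq_cond.
apply: size_sum_leq => i _ /andP [+ _]; rewrite mem_index_iota => /andP [_ lt_in].
by apply: leq_trans (size_scale_leq _ _) _; rewrite size_ffact_XsubC.
Qed.

Section ChuQuotient.
Variable F : numFieldType.
Implicit Types (α β x : F) (q : nat).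

Definition chu_quot α β q : {poly {poly F}} :=
  \sum_(0 <= e < q.+1)
    (((q - e)`!%:R)^-1 *: (ffact ('X + α%:P) (q - e) * ffact ('X + β%:P) (q - e)))%:P
    * ffact ('X - ('X *+ 2 + (α + β - q%:R)%:P)%:P) e.

Lemma wdeg_le_chu_quot α β q : wdeg_le q.*2 (chu_quot α β q).
Proof.
apply: wdeg_le_sum => e; rewrite mem_index_iota => /andP [_ le_eq] _.
have -> : q.*2 = ((q - e).*2 + e.*2)%N by lia.
apply: wdeg_leM; last first.
  exact/wdeg_le_ffact_XsubC/size_XMnaddC_le.
apply/wdeg_leC/(leq_trans (size_scale_leq _ _))/(leq_trans (size_polyMleq _ _)).
by rewrite !size_ffact_XaddC; lia.
Qed.

Lemma chu_quotE α β q n x : x + α = (n + q)%:R ->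
  map_poly (horner_eval x) (chu_quot α β q) =
  ffact 'X (n + q) %/ ffact ('X - (x + β)%:P) n.
Proof.
move=> def_x; rewrite divp_ffact_XsubC rmorph_sum; apply: eq_bigr => e _.
rewrite rmorphM /= map_polyC (rmorph_ffact (map_poly _)) /= map_polyXsubC /=.
rewrite !horner_evalE !hornerE /= !horner_ffact !hornerE def_x -bin_ffact_nat.
rewrite -mul_polyC; congr (_%:P * ffact ('X - _%:P) e).
have -> : n%:R = x + α - q%:R :> F by rewrite def_x natrD addrK.
ring.
Qed.

End ChuQuotient.

Section FallingFactorialMatrix.
Variables lam eps : seq nat.
Local Notation s := (size lam).
Local Notation t := (size eps).

Definition cpoly (i : nat) : {poly rat} := 'X + (i%:R - (nth 0%N eps i)%:R)%:P.

Definition node (k l : nat) : rat :=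
  if (l < k - t)%N then (k + t + l)%:R else (cpoly (l - (k - t))).[k%:R].

Definition col_deg (j : nat) : nat := nth 0%N lam j + (s - j.+1).

Definition col_poly (k j : nat) : {poly rat} := ffact 'X (nth 0%N lam j + (k - j.+1)).

Definition divdiff (k l j : nat) : rat :=
  (col_poly k j %/ newton_basis (node k) l).[node k l].

Lemma cpolyE i x : (cpoly i).[x] = x + i%:R - (nth 0%N eps i)%:R.
Proof. by rewrite /cpoly hornerD hornerX hornerC addrA. Qed.

Lemma cvecE k (i : 'I_k) : cvec eps i = (cpoly i).[k%:R].
Proof. by rewrite cpolyE /cvec natrD. Qed.

Lemma node_tail k i : (t <= k)%N -> (i < t)%N -> node k (k - t + i) = (cpoly i).[k%:R].
Proof. by move=> le_tk lt_it; rewrite /node ifF ?addKn //; apply/negbTE; lia. Qed.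

Lemma node_cover k (i : 'I_k) : (t <= k)%N -> exists2 r, (r < k)%N & node k r = cvec eps i.
Proof.
move=> le_tk; rewrite cvecE; have lt_ik := ltn_ord i.
have [lt_it|le_ti] := ltnP i t; first by exists (k - t + i)%N; [lia | rewrite node_tail].
exists (i - t)%N; first lia.
rewrite /node ifT; last lia.
by rewrite cpolyE nth_default // subr0 -!natrD; congr _%:R; lia.
Qed.

Lemma det_ffmat_newton k : (t <= k)%N ->
  \det (ffmat lam eps k) =
  Delta (cvec eps (k:=k)) * \det (\matrix_(l < k, j < k) divdiff k l j).
Proof.
move=> le_tk.
have -> : ffmat lam eps k = \matrix_(i, j) (col_poly k j).[cvec eps i].
  by apply/matrixP => i j; rewrite !mxE /col_poly horner_ffact hornerX.
by rewrite (det_newton _ (fun i => node_cover i le_tk)).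
Qed.

Lemma size_col_poly k j : size (col_poly k j) = (nth 0%N lam j + (k - j.+1)).+1.
Proof. by rewrite /col_poly -[X in ffact X](subr0 'X) -polyC0 size_ffact_XsubC. Qed.

Lemma monic_col_poly k j : col_poly k j \is monic.
Proof. by rewrite /col_poly -[X in ffact X](subr0 'X) -polyC0 monic_ffact_XsubC. Qed.

Lemma det_divdiff_minor p : (t <= p + s)%N ->
  \det (\matrix_(l < p + s, j < p + s) divdiff (p + s) l j) =
  (-1) ^+ (\sum_(s <= i < p + s) i) *
  \det (\matrix_(r < s, j < s) divdiff (p + s) (p + r) j).
Proof.
move=> le_t; rewrite det_peel_antidiagonal; last first.
  move=> l c le_sc le_lc; have lt_c := ltn_ord c.
  rewrite mxE /divdiff divp_newton_basis_monic ?monic_col_poly ?size_col_poly ?nth_default //.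
    by rewrite -polyC_natr hornerC; congr _%:R; apply/eqP/eqP; lia.
  by lia.
by congr (_ * \det _); apply/matrixP => r j; rewrite !mxE.
Qed.

Lemma newton_basis_node_run k n : (n <= k - t)%N ->
  newton_basis (node k) n = ffact ('X - (k + t)%:R%:P) n.
Proof.
move=> le_n; rewrite ffact_XsubC; apply: eq_bigr => i _.
by rewrite /node ifT -?natrD //; have := ltn_ord i; lia.
Qed.

Lemma divp_col_poly_newton_basis j r : (j < s)%N -> (r < s)%N -> (r <= col_deg j)%N ->
  exists2 G, wdeg_le (col_deg j - r).*2 G & forall p, (t <= p + s)%N ->
    col_poly (p + s) j %/ newton_basis (node (p + s)) (p + r) =
    map_poly (horner_eval (p + s)%:R) G.
Proof.
move=> lt_js lt_rs le_r.
(* Row [p + r] divides by the first [p + r - d] nodes of the run and by [c_0, ..., c_(d-1)]. *)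
pose d := (r + t - s)%N; pose q := (col_deg j - r + d)%N.
pose α : rat := (nth 0%N lam j)%:R - j.+1%:R.
have le_cpoly i : (i < d)%N -> (size (cpoly i) <= 2)%N by rewrite size_XaddC.
have le_chu : wdeg_le ((col_deg j - r).*2 + d.*2) (chu_quot α t%:R q).
  by apply: wdeg_leW (wdeg_le_chu_quot _ _ _); lia.
have [G le_G def_G] := wdeg_le_divp_prod_XsubC le_cpoly le_chu.
exists G => // p le_t.
have -> : (p + r = (p + r - d) + d)%N by lia.
rewrite newton_basisD -divp_divl newton_basis_node_run; last lia.
rewrite -def_G; congr (_ %/ _).
  have deg_col : (nth 0%N lam j + (p + s - j.+1) = (p + r - d) + q)%N.
    by move: le_r; rewrite /q /d /col_deg; lia.
  have def_x : (p + s)%:R + α = (p + r - d + q)%:R.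
    by rewrite -deg_col /α !natrD natrB ?natrD; [ring | lia].
  by rewrite (chu_quotE _ def_x) /col_poly deg_col [(p + s + t)%:R]natrD.
apply: eq_bigr => i _; congr ('X - _%:P).
have lt_id : (i < r + t - s)%N := ltn_ord i.
have -> : (p + r - d + i = p + s - t + i)%N by rewrite /d; lia.
by apply: node_tail; lia.
Qed.

Definition row_node (r : nat) : {poly rat} :=
  if (r + t < s)%N then 'X *+ 2 + ((t + r)%:R - s%:R)%:P else cpoly (r + t - s).

Lemma size_row_node r : (size (row_node r) <= 2)%N.
Proof.
by rewrite /row_node; case: ifP => _; rewrite ?size_XaddC ?size_XMnaddC_le.
Qed.

Lemma row_nodeE p r : (t <= p + s)%N -> (r < s)%N ->
  node (p + s) (p + r) = (row_node r).[(p + s)%:R].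
Proof.
move=> le_t lt_rs; rewrite /node /row_node.
case: ifP => lt_rt; case: ifP => lt_run; try lia.
  rewrite hornerD hornerMn hornerX hornerC mulr2n; apply: (@addIr _ s%:R).
  by rewrite -addrA subrK -!natrD; congr _%:R; lia.
by congr (cpoly _).[_]; lia.
Qed.

Lemma divdiff_poly j r : (j < s)%N -> (r < s)%N ->
  exists2 P : {poly rat}, (size P <= (col_deg j).*2.+1 - r.*2)%N &
    forall p, (t <= p + s)%N -> divdiff (p + s) (p + r) j = P.[(p + s)%:R].
Proof.
move=> lt_js lt_rs; have [lt_deg_r|le_r_deg] := ltnP (col_deg j) r.
  exists 0 => [|p le_t]; first by rewrite size_poly0.
  rewrite /divdiff divp_small ?horner0 // size_col_poly size_newton_basis.
  by move: lt_deg_r; rewrite /col_deg; lia.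
have [G le_G def_G] := divp_col_poly_newton_basis lt_js lt_rs le_r_deg.
exists G.[row_node r] => [|p le_t].
  by apply: leq_trans (size_horner_wdeg_le (size_row_node r) le_G) _; lia.
by rewrite /divdiff def_G // row_nodeE // horner_map.
Qed.

End FallingFactorialMatrix.

Lemma sum_col_deg (lam : seq nat) :
  (\sum_(j < size lam) col_deg lam j = sumn lam + \sum_(i < size lam) i)%N.
Proof.
rewrite big_split /=; congr (_ + _)%N; first by rewrite sumnE (big_nth 0%N) big_mkord.
by rewrite (reindex_inj rev_ord_inj) /=; apply: eq_bigr => i _; have := ltn_ord i; lia.
Qed.

Lemma sum_double n (f : 'I_n -> nat) : (\sum_(i < n) (f i).*2 = (\sum_(i < n) f i).*2)%N.
Proof. by rewrite -muln2 big_distrl /=; apply: eq_bigr => i _; rewrite muln2. Qed.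

Lemma sum_range_triangular p s :
  (\sum_(s <= i < p + s) i + s * (s - 1) %/ 2 = (p + s) * (p + s - 1) %/ 2)%N.
Proof.
rewrite !divn2 !subn1 -!bin2 -!bin2_sum addnC.
by rewrite -(@big_cat_nat _ _ _ s 0 (p + s)) //; lia.
Qed.

Theorem theorem4 (lam eps : seq nat) :
  sorted geq lam ->
  exists Q : {poly rat},
    (size Q <= (2 * sumn lam).+1)%N /\
    forall k : nat, (maxn (size lam) (size eps) <= k)%N ->
      \det (ffmat lam eps k) =
        (-1) ^+ (k * (k - 1) %/ 2) * Delta (cvec eps (k:=k)) * Q.[k%:R].
Proof.
move=> _.
have [P le_P P_eval] := fin_all_exists2 (fun rj : 'I_(size lam) * 'I_(size lam) =>
  divdiff_poly eps (ltn_ord rj.2) (ltn_ord rj.1)).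
pose M := \matrix_(r < size lam, j < size lam) P (r, j).
exists ((-1) ^+ (size lam * (size lam - 1) %/ 2) *: \det M); split.
  apply: leq_trans (size_scale_leq _ _) _.
  apply: leq_trans (size_det_weighted (d := fun j => (col_deg lam j).*2)
                                      (e := fun i => (i : nat).*2) _) _.
    by move=> r j; rewrite mxE; exact: le_P (r, j).
  by rewrite !sum_double sum_col_deg; lia.
move=> k; rewrite geq_max => /andP [le_sk le_tk].
have [p def_k] : exists p, k = (p + size lam)%N by exists (k - size lam)%N; rewrite subnK.
subst k; rewrite det_ffmat_newton // det_divdiff_minor //.
have -> : \matrix_(r < size lam, j < size lam) divdiff lam eps (p + size lam) (p + r) j =
          map_mx (horner_eval (p + size lam)%:R) M.
  by apply/matrixP => r j; rewrite !mxE (P_eval (r, j)).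
rewrite det_map_mx hornerZ -(sum_range_triangular p (size lam)) exprD /= horner_evalE.
set S := (-1) ^+ (_ %/ 2); have sqrS : S * S = 1 by rewrite /S -signr_odd -expr2 sqrr_sign.
rewrite -[LHS]mul1r -sqrS; ring.
Qed.
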